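(* Let $n\geq 4$ be an integer and let $x_{1},\dots,x_{n}\in \mathbb{R}$ satisfy $\sum_{i=1}^{n}x_{i}=0$ and $\sum_{i=1}^{n}x_{i}^{2}=1$. Set $x_{0}=x_{n}$. Then $$\sum_{i=1}^{n}x_{i}x_{i-1}< \frac{3n^{2}-4\pi^{2}}{3n^{2}+2\pi^{2}}.$$ *)

From Stdlib Require Import Reals.
Open Scope R_scope.

Fixpoint sum1n (n : nat) (f : nat -> R) : R :=
  match n with
  | O => 0
  | S m => sum1n m f + f (S m)
  end.

(* Expand x in the discrete Fourier basis.  Orthogonality of the n-th roots of
   unity turns the power spectrum P_k = |sum_j x_j e^(2 pi i j k / n)|^2 into
   sum_k P_k = n sum_j x_j^2  and  sum_k P_k cos (2 pi k / n) = n sum_j x_j x_(j-1).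
   Since sum_j x_j = 0 the frequency k = n carries no power, and for the other
   frequencies cos (2 pi k / n) <= cos (2 pi / n); so the cyclic sum is at most
   cos (2 pi / n).  Finally cos t <= 1 - t^2/2 + t^4/24 < (6 - 2 t^2) / (6 + t^2)
   for 0 < t <= pi/2, and at t = 2 pi / n the right-hand side is the bound. *)

From Stdlib Require Import Reals Lra Lia ZArith.
Open Scope R_scope.

Lemma sum1n_ext n f g :
  (forall i, (1 <= i <= n)%nat -> f i = g i) -> sum1n n f = sum1n n g.
Proof.
  induction n as [|n IH]; intros Hfg; simpl; [reflexivity|].
  rewrite IH, Hfg; [reflexivity|lia|intros; apply Hfg; lia].
Qed.

Lemma sum1n_add n f g : sum1n n (fun i => f i + g i) = sum1n n f + sum1n n g.
Proof. induction n as [|n IH]; simpl; [ring|]. rewrite IH; ring. Qed.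

Lemma sum1n_scal n c f : sum1n n (fun i => c * f i) = c * sum1n n f.
Proof. induction n as [|n IH]; simpl; [ring|]. rewrite IH; ring. Qed.

Lemma sum1n_const n c : sum1n n (fun _ => c) = INR n * c.
Proof. induction n as [|n IH]; simpl sum1n; [simpl; ring|]. rewrite IH, S_INR; ring. Qed.

Lemma sum1n_le n f g :
  (forall i, (1 <= i <= n)%nat -> f i <= g i) -> sum1n n f <= sum1n n g.
Proof.
  induction n as [|n IH]; intros Hfg; simpl; [lra|].
  apply Rplus_le_compat; [apply IH; intros; apply Hfg|apply Hfg]; lia.
Qed.

Lemma sum1n_swap n m f :
  sum1n n (fun i => sum1n m (fun j => f i j)) = sum1n m (fun j => sum1n n (fun i => f i j)).
Proof.
  induction n as [|n IH]; simpl.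
  - rewrite sum1n_const; ring.
  - rewrite IH, sum1n_add; reflexivity.
Qed.

Lemma sum1n_mul n m f g :
  sum1n n f * sum1n m g = sum1n n (fun i => sum1n m (fun j => f i * g j)).
Proof.
  rewrite Rmult_comm, <- sum1n_scal; apply sum1n_ext; intros i _.
  rewrite Rmult_comm, <- sum1n_scal; reflexivity.
Qed.

Lemma sum1n_kronecker n f p c :
  (1 <= p <= n)%nat -> sum1n n (fun l => f l * (if Nat.eqb l p then c else 0)) = c * f p.
Proof.
  intros Hp; induction n as [|n IH]; cbn [sum1n]; [lia|].
  destruct (Nat.eqb_spec (S n) p) as [<-|Hne].
  - rewrite (sum1n_ext n _ (fun _ => 0)), sum1n_const; [ring|].
    intros i Hi; replace (Nat.eqb i (S n)) with false by (symmetry; apply Nat.eqb_neq; lia); ring.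
  - rewrite IH by lia; ring.
Qed.

Lemma sum1n_telescope n g : sum1n n (fun k => g k - g (k - 1)%nat) = g n - g O.
Proof.
  induction n as [|n IH]; cbn [sum1n]; [ring|].
  rewrite IH; replace (S n - 1)%nat with n by lia; ring.
Qed.

Lemma cos_2PI_mul_IZR z : cos (2 * PI * IZR z) = 1.
Proof.
  replace (2 * PI * IZR z) with (2 * (IZR z * PI)) by ring.
  rewrite cos_2a_sin, sin_eq_0_1 by (exists z; reflexivity); ring.
Qed.

Lemma sin_2PI_mul_IZR z : sin (2 * PI * IZR z) = 0.
Proof.
  replace (2 * PI * IZR z) with (2 * (IZR z * PI)) by ring.
  rewrite sin_2a, sin_eq_0_1 by (exists z; reflexivity); ring.
Qed.

Lemma sin_add_2PI_mul_IZR a z : sin (a + 2 * PI * IZR z) = sin a.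
Proof. rewrite sin_plus, cos_2PI_mul_IZR, sin_2PI_mul_IZR; ring. Qed.

Definition root_cos_sum (n : nat) (m : R) : R :=
  sum1n n (fun k => cos (2 * PI * INR k * m / INR n)).

Section RootsOfUnity.
Variable n : nat.
Hypothesis n_pos : (0 < n)%nat.

Let INR_n_neq0 : INR n <> 0.
Proof. apply not_0_INR; lia. Qed.

Lemma root_cos_sum_multiple z :
  (Z.of_nat n | z)%Z -> root_cos_sum n (IZR z) = INR n.
Proof.
  intros [q ->]; unfold root_cos_sum.
  rewrite (sum1n_ext _ _ (fun _ => 1)), sum1n_const; [ring|].
  intros k _; rewrite <- (cos_2PI_mul_IZR (Z.of_nat k * q)), !mult_IZR, <- !INR_IZR_INZ.
  f_equal; field; assumption.
Qed.

Lemma root_cos_sum_not_multiple z :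
  ~ (Z.of_nat n | z)%Z -> root_cos_sum n (IZR z) = 0.
Proof.
  intros Hz; set (a := PI * IZR z / INR n).
  assert (Ha : sin a <> 0).
  { intros Hsin; apply Hz; destruct (sin_eq_0_0 _ Hsin) as [c Hc]; exists c.
    apply eq_IZR; rewrite mult_IZR, <- INR_IZR_INZ.
    apply (Rmult_eq_reg_r (PI / INR n)).
    - unfold a in Hc; transitivity (PI * IZR z / INR n); [field|rewrite Hc; field]; assumption.
    - pose proof PI_RGT_0; pose proof (lt_0_INR n ltac:(lia)).
      apply Rgt_not_eq, Rdiv_lt_0_compat; assumption. }
  (* 2 sin a cos (2 a k) = sin (2 a k + a) - sin (2 a (k - 1) + a) telescopes. *)
  apply (Rmult_eq_reg_l (2 * sin a)); [|lra].
  unfold root_cos_sum; rewrite <- sum1n_scal, Rmult_0_r.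
  set (g := fun k => sin (2 * a * INR k + a)).
  rewrite (sum1n_ext _ _ (fun k => g k - g (k - 1)%nat)), sum1n_telescope.
  - unfold g; simpl INR.
    replace (2 * a * INR n + a) with (a + 2 * PI * IZR z) by (unfold a; field; assumption).
    rewrite sin_add_2PI_mul_IZR, Rmult_0_r, Rplus_0_l; ring.
  - intros k Hk; unfold g; rewrite minus_INR by lia; simpl INR.
    replace (2 * a * (INR k - 1) + a) with (2 * a * INR k - a) by ring.
    replace (2 * PI * INR k * IZR z / INR n) with (2 * a * INR k) by (unfold a; field; assumption).
    rewrite sin_plus, sin_minus; ring.
Qed.

Lemma sum1n_mul_root_cos_sum f j d p :
  (1 <= p <= n)%nat ->
  (forall l, (1 <= l <= n)%nat ->
     (Z.of_nat n | Z.of_nat j - Z.of_nat l - Z.of_nat d)%Z <-> l = p) ->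
  sum1n n (fun l => f l * root_cos_sum n (INR j - INR l - INR d)) = INR n * f p.
Proof.
  intros Hp Hdiv; rewrite <- (sum1n_kronecker n f p (INR n)) by assumption.
  apply sum1n_ext; intros l Hl; f_equal.
  replace (INR j - INR l - INR d) with (IZR (Z.of_nat j - Z.of_nat l - Z.of_nat d))
    by (rewrite !minus_IZR, <- !INR_IZR_INZ; reflexivity).
  destruct (Nat.eqb_spec l p) as [Hlp|Hlp].
  - apply root_cos_sum_multiple, Hdiv; assumption.
  - apply root_cos_sum_not_multiple; rewrite Hdiv by assumption; assumption.
Qed.

End RootsOfUnity.

Definition cyclic_prev (n j : nat) : nat := if Nat.eqb j 1 then n else (j - 1)%nat.

Lemma divide_sub_iff n j l :
  (1 <= j <= n)%nat -> (1 <= l <= n)%nat ->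
  (Z.of_nat n | Z.of_nat j - Z.of_nat l - 0)%Z <-> l = j.
Proof.
  intros Hj Hl; split.
  - intros [c Hc]; assert (c = 0 \/ 1 <= c \/ c <= -1)%Z as [->|[Hc1|Hc1]] by lia; nia.
  - intros ->; exists 0%Z; lia.
Qed.

Lemma divide_sub_pred_iff n j l :
  (1 <= j <= n)%nat -> (1 <= l <= n)%nat ->
  (Z.of_nat n | Z.of_nat j - Z.of_nat l - 1)%Z <-> l = cyclic_prev n j.
Proof.
  intros Hj Hl; unfold cyclic_prev; split.
  - intros [c Hc]; assert (c = 0 \/ c = -1 \/ 1 <= c \/ c <= -2)%Z as [->|[->|[Hc1|Hc1]]] by lia;
      destruct (Nat.eqb_spec j 1); nia.
  - destruct (Nat.eqb_spec j 1); intros ->; [exists (-1)%Z | exists 0%Z]; lia.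
Qed.

Section PowerSpectrum.
Variable n : nat.
Variable x : nat -> R.

Definition fourier_cos k := sum1n n (fun j => x j * cos (2 * PI * INR k * INR j / INR n)).
Definition fourier_sin k := sum1n n (fun j => x j * sin (2 * PI * INR k * INR j / INR n)).
Definition power_spectrum k := fourier_cos k ^ 2 + fourier_sin k ^ 2.

Definition cyclic_autocorr := sum1n n (fun j => x j * x (cyclic_prev n j)).

Lemma power_spectrum_mul_cos k r :
  power_spectrum k * cos (2 * PI * INR k * r / INR n) =
  sum1n n (fun j => sum1n n (fun l =>
    x j * x l * cos (2 * PI * INR k * (INR j - INR l - r) / INR n))).
Proof.
  set (b := 2 * PI * INR k * r / INR n).
  assert (Hcos : sum1n n (fun j => x j * cos (2 * PI * INR k * INR j / INR n - b)) =
                 cos b * fourier_cos k + sin b * fourier_sin k).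
  { unfold fourier_cos, fourier_sin; rewrite <- !sum1n_scal, <- sum1n_add.
    apply sum1n_ext; intros j _; rewrite cos_minus; ring. }
  assert (Hsin : sum1n n (fun j => x j * sin (2 * PI * INR k * INR j / INR n - b)) =
                 cos b * fourier_sin k + - sin b * fourier_cos k).
  { unfold fourier_cos, fourier_sin; rewrite <- !sum1n_scal, <- sum1n_add.
    apply sum1n_ext; intros j _; rewrite sin_minus; ring. }
  transitivity (sum1n n (fun j => x j * cos (2 * PI * INR k * INR j / INR n - b)) * fourier_cos k +
                sum1n n (fun j => x j * sin (2 * PI * INR k * INR j / INR n - b)) * fourier_sin k).
  { rewrite Hcos, Hsin; unfold power_spectrum; ring. }
  unfold fourier_cos, fourier_sin; rewrite !sum1n_mul, <- sum1n_add.
  apply sum1n_ext; intros j _; rewrite <- sum1n_add; apply sum1n_ext; intros l _.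
  replace (2 * PI * INR k * (INR j - INR l - r) / INR n)
    with (2 * PI * INR k * INR j / INR n - b - 2 * PI * INR k * INR l / INR n)
    by (unfold b, Rdiv; ring).
  rewrite (cos_minus (_ - b)); ring.
Qed.

Lemma sum_power_spectrum_mul_cos r :
  sum1n n (fun k => power_spectrum k * cos (2 * PI * INR k * r / INR n)) =
  sum1n n (fun j => sum1n n (fun l => x j * x l * root_cos_sum n (INR j - INR l - r))).
Proof.
  rewrite (sum1n_ext _ _ _ (fun k _ => power_spectrum_mul_cos k r)), sum1n_swap.
  apply sum1n_ext; intros j _; rewrite sum1n_swap; apply sum1n_ext; intros l _.
  unfold root_cos_sum; rewrite <- sum1n_scal; reflexivity.
Qed.

Hypothesis n_pos : (0 < n)%nat.

Lemma power_spectrum_top : power_spectrum n = sum1n n x ^ 2.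
Proof.
  unfold power_spectrum, fourier_cos, fourier_sin.
  assert (Hangle : forall j, 2 * PI * INR n * INR j / INR n = 2 * PI * IZR (Z.of_nat j)).
  { intros j; rewrite <- INR_IZR_INZ; field; apply not_0_INR; lia. }
  rewrite (sum1n_ext _ _ x), (sum1n_ext _ (fun j => _ * sin _) (fun _ => 0)), sum1n_const.
  - ring.
  - intros j _; rewrite Hangle, sin_2PI_mul_IZR; ring.
  - intros j _; rewrite Hangle, cos_2PI_mul_IZR; ring.
Qed.

Lemma sum_power_spectrum :
  sum1n n power_spectrum = INR n * sum1n n (fun j => x j ^ 2).
Proof.
  transitivity (sum1n n (fun k => power_spectrum k * cos (2 * PI * INR k * INR 0 / INR n))).
  { apply sum1n_ext; intros k _; simpl INR.
    rewrite Rmult_0_r; unfold Rdiv; rewrite Rmult_0_l, cos_0; ring. }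
  rewrite sum_power_spectrum_mul_cos, <- sum1n_scal; apply sum1n_ext; intros j Hj.
  rewrite (sum1n_mul_root_cos_sum n n_pos (fun l => x j * x l) j 0 j Hj).
  - ring.
  - intros l Hl; apply divide_sub_iff; assumption.
Qed.

Lemma sum_power_spectrum_mul_cos1 :
  sum1n n (fun k => power_spectrum k * cos (2 * PI * INR k / INR n)) =
  INR n * cyclic_autocorr.
Proof.
  transitivity (sum1n n (fun k => power_spectrum k * cos (2 * PI * INR k * INR 1 / INR n))).
  { apply sum1n_ext; intros k _; simpl INR; rewrite Rmult_1_r; reflexivity. }
  rewrite sum_power_spectrum_mul_cos; unfold cyclic_autocorr; rewrite <- sum1n_scal.
  apply sum1n_ext; intros j Hj.
  rewrite (sum1n_mul_root_cos_sum n n_pos (fun l => x j * x l) j 1 (cyclic_prev n j)).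
  - ring.
  - unfold cyclic_prev; destruct (Nat.eqb_spec j 1); lia.
  - intros l Hl; apply divide_sub_pred_iff; assumption.
Qed.

End PowerSpectrum.

Lemma cos_root_angle_le n k :
  (1 <= k < n)%nat -> cos (2 * PI * INR k / INR n) <= cos (2 * PI / INR n).
Proof.
  intros Hk; pose proof PI_RGT_0 as PI_pos.
  assert (Hn : 0 < INR n) by (apply lt_0_INR; lia).
  assert (Hk1 : 1 <= INR k) by (apply (le_INR 1); lia).
  assert (Hkn : INR k + 1 <= INR n) by (rewrite <- S_INR; apply le_INR; lia).
  set (th := 2 * PI / INR n).
  assert (Hth : th * INR n = 2 * PI) by (unfold th; field; lra).
  replace (2 * PI * INR k / INR n) with (th * INR k) by (unfold th; field; lra).
  assert (th_pos : 0 < th) by (unfold th; apply Rdiv_lt_0_compat; lra).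
  destruct (Rle_lt_dec (th * INR k) PI) as [Hle|Hgt].
  - apply cos_decr_1; nra.
  - replace (cos (th * INR k)) with (cos (2 * PI - th * INR k))
      by (rewrite cos_minus, cos_2PI, sin_2PI; ring).
    apply cos_decr_1; nra.
Qed.

Lemma cyclic_autocorr_le n x :
  (0 < n)%nat -> sum1n n x = 0 ->
  cyclic_autocorr n x <= cos (2 * PI / INR n) * sum1n n (fun j => x j ^ 2).
Proof.
  intros n_pos Hsum.
  assert (Hn : 0 < INR n) by (apply lt_0_INR; lia).
  apply (Rmult_le_reg_l (INR n)); [assumption|].
  rewrite <- sum_power_spectrum_mul_cos1 by assumption.
  replace (INR n * _) with (cos (2 * PI / INR n) * (INR n * sum1n n (fun j => x j ^ 2))) by ring.
  rewrite <- sum_power_spectrum, <- sum1n_scal by assumption.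
  destruct n as [|m]; [lia|]; cbn [sum1n].
  rewrite (power_spectrum_top (S m) x n_pos), Hsum.
  apply Rplus_le_compat.
  - apply sum1n_le; intros k Hk.
    assert (0 <= power_spectrum (S m) x k) by (unfold power_spectrum; nra).
    pose proof (cos_root_angle_le (S m) k ltac:(lia)); nra.
  - right; ring.
Qed.

Lemma cos_lt_pade t : 0 < t <= PI / 2 -> cos t < (6 - 2 * t ^ 2) / (6 + t ^ 2).
Proof.
  intros Ht; pose proof PI_4.
  assert (Htaylor : cos t <= 1 - t ^ 2 / 2 + t ^ 4 / 24).
  { destruct (cos_bound t 0) as [_ Hub]; [lra|lra|].
    unfold cos_approx, cos_term in Hub; simpl in *; lra. }
  assert (Hgap : (6 - 2 * t ^ 2) / (6 + t ^ 2) - (1 - t ^ 2 / 2 + t ^ 4 / 24)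
                 = t ^ 4 * (6 - t ^ 2) / (24 * (6 + t ^ 2))) by (field; nra).
  assert (0 < t ^ 4 * (6 - t ^ 2) / (24 * (6 + t ^ 2))).
  { apply Rdiv_lt_0_compat; [apply Rmult_lt_0_compat; [apply pow_lt|]|]; nra. }
  lra.
Qed.

Theorem proposition2p2 (n : nat) (x : nat -> R) :
  (4 <= n)%nat ->
  sum1n n x = 0 ->
  sum1n n (fun i => x i ^ 2) = 1 ->
  sum1n n (fun i => x i * (if Nat.eqb i 1 then x n else x (i - 1)%nat))
    < (3 * INR n ^ 2 - 4 * PI ^ 2) / (3 * INR n ^ 2 + 2 * PI ^ 2).
Proof.
  intros Hn Hsum Hsq.
  replace (sum1n n _) with (cyclic_autocorr n x)
    by (apply sum1n_ext; intros i _; unfold cyclic_prev; destruct (Nat.eqb i 1); reflexivity).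
  pose proof (cyclic_autocorr_le n x ltac:(lia) Hsum) as Hle.
  rewrite Hsq, Rmult_1_r in Hle.
  assert (Hn4 : 4 <= INR n) by (replace 4 with (INR 4) by (simpl; ring); apply le_INR; assumption).
  pose proof PI_RGT_0.
  assert (Hangle : 0 < 2 * PI / INR n <= PI / 2).
  { split; [apply Rdiv_lt_0_compat; lra|].
    apply Rmult_le_reg_r with (INR n); [lra|].
    unfold Rdiv; rewrite Rmult_assoc, Rinv_l; nra. }
  replace ((3 * INR n ^ 2 - 4 * PI ^ 2) / (3 * INR n ^ 2 + 2 * PI ^ 2))
    with ((6 - 2 * (2 * PI / INR n) ^ 2) / (6 + (2 * PI / INR n) ^ 2)).
  - pose proof (cos_lt_pade _ Hangle); lra.
  - field; split; nra.
Qed.
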